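(* Let $R\ge0$ and let $X$ be an $R$-rough geodesic metric space that is asymptotically $\mathrm{CAT}(0)$. Then $X$ is strongly shortcut.
   Context: A metric space is asymptotically $\mathrm{CAT}(0)$ if every asymptotic cone of it is $\mathrm{CAT}(0)$. Asymptotic cone: for a nonprincipal ultrafilter $\mathscr U$ on $\mathbb N$, basepoints $b^{(m)}\in X$ and scalars $s^{(m)}\to\infty$, take sequences $(x_m)$ with $d(x_m,b^{(m)})/s^{(m)}$ bounded, pseudometric $\lim_{\mathscr U} d(x_m,x'_m)/s^{(m)}$, and pass to the metric quotient. $X$ is $R$-rough geodesic if any $x_1,x_2$ are joined by $f\colon[0,\ell]\to X$, $\ell=d(x_1,x_2)$, $f(0)=x_1,f(\ell)=x_2$, with $|d(f(s),f(t))-|s-t||\le R$. An $R$-circle is a map $\alpha\colon S\to X$ from a Riemannian circle $S$ of length $|S|$ with $d(\alpha(p),\alpha(q))\le d_S(p,q)+R$; for $K>1$ it is $\frac1K$-almost isometric if $d(\alpha(p),\alpha(\bar p))\ge\frac1K\cdot\frac{|S|}2$ for all antipodal $p,\bar p\in S$. $X$ is strongly shortcut if for some $K>1$ there is a bound on the lengths of the $\frac1K$-almost isometric $R$-circles in $X$. *)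

From Stdlib Require Import Reals Lra ClassicalEpsilon.
Open Scope R_scope.

Definition is_metric {X : Type} (d : X -> X -> R) : Prop :=
  (forall x y, 0 <= d x y) /\
  (forall x y, d x y = 0 <-> x = y) /\
  (forall x y, d x y = d y x) /\
  (forall x y z, d x z <= d x y + d y z).

Definition rough_geodesic {X : Type} (d : X -> X -> R) (Rg : R) : Prop :=
  forall x1 x2 : X, exists f : R -> X,
    f 0 = x1 /\ f (d x1 x2) = x2 /\
    forall s t, 0 <= s <= d x1 x2 -> 0 <= t <= d x1 x2 ->
      Rabs (d (f s) (f t) - Rabs (s - t)) <= Rg.

Definition nonprincipal_ultrafilter (U : (nat -> Prop) -> Prop) : Prop :=
  U (fun _ => True) /\
  ~ U (fun _ => False) /\
  (forall A B, U A -> U B -> U (fun n => A n /\ B n)) /\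
  (forall A B : nat -> Prop, U A -> (forall n, A n -> B n) -> U B) /\
  (forall A, U A \/ U (fun n => ~ A n)) /\
  (forall k : nat, U (fun n => n <> k)).

Definition is_ulim (U : (nat -> Prop) -> Prop) (a : nat -> R) (L : R) : Prop :=
  forall eps, 0 < eps -> U (fun m => Rabs (a m - L) < eps).

(** The ultralimit (when it exists; it always exists for bounded sequences,
    which is the only case used below). *)
Definition ulim (U : (nat -> Prop) -> Prop) (a : nat -> R) : R :=
  match excluded_middle_informative (exists L, is_ulim U a L) with
  | left H => proj1_sig (constructive_indefinite_description _ H)
  | right _ => 0
  end.

(** Asymptotic cone: sequences (x_m) with d(x_m,b_m)/s_m bounded ... *)
Definition cone_seq {X : Type} (d : X -> X -> R) (b : nat -> X) (s : nat -> R) : Type :=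
  { x : nat -> X | exists C, forall m, d (x m) (b m) / s m <= C }.

(** ... with the pseudometric lim_U d(x_m,x'_m)/s_m ... *)
Definition cone_pd {X : Type} (d : X -> X -> R) (U : (nat -> Prop) -> Prop)
  (b : nat -> X) (s : nat -> R) (x y : cone_seq d b s) : R :=
  ulim U (fun m => d (proj1_sig x m) (proj1_sig y m) / s m).

(** ... and the metric quotient: points are the classes {y | pd x y = 0}. *)
Definition cone_pt {X : Type} (d : X -> X -> R) (U : (nat -> Prop) -> Prop)
  (b : nat -> X) (s : nat -> R) : Type :=
  { P : cone_seq d b s -> Prop | exists x, P = (fun y => cone_pd d U b s x y = 0) }.

Definition cone_rep {X : Type} {d : X -> X -> R} {U : (nat -> Prop) -> Prop}
  {b : nat -> X} {s : nat -> R} (P : cone_pt d U b s) : cone_seq d b s :=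
  proj1_sig (constructive_indefinite_description _ (proj2_sig P)).

Definition cone_dist {X : Type} (d : X -> X -> R) (U : (nat -> Prop) -> Prop)
  (b : nat -> X) (s : nat -> R) (P Q : cone_pt d U b s) : R :=
  cone_pd d U b s (cone_rep P) (cone_rep Q).

Definition geodesic_seg {Y : Type} (dY : Y -> Y -> R) (p q : Y) (g : R -> Y) : Prop :=
  g 0 = p /\ g (dY p q) = q /\
  forall s t, 0 <= s <= dY p q -> 0 <= t <= dY p q -> dY (g s) (g t) = Rabs (s - t).

Definition eucl (P Q : R * R) : R :=
  sqrt ((fst P - fst Q) ^ 2 + (snd P - snd Q) ^ 2).

Definition lin (A B : R * R) (l : R) : R * R :=
  (fst A + l * (fst B - fst A), snd A + l * (snd B - snd A)).

(** x is the point at parameter s of the geodesic side g from a to b, and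
    X is its comparison point on the comparison side [A,B]. *)
Definition on_side {Y : Type} (dY : Y -> Y -> R) (a b : Y) (g : R -> Y)
  (A B : R * R) (x : Y) (Xc : R * R) : Prop :=
  exists s, 0 <= s <= dY a b /\ x = g s /\ Xc = lin A B (s / dY a b).

Definition CAT0 {Y : Type} (dY : Y -> Y -> R) : Prop :=
  is_metric dY /\
  (forall p q : Y, exists g, geodesic_seg dY p q g) /\
  (forall (p q r : Y) (g1 g2 g3 : R -> Y),
     geodesic_seg dY p q g1 -> geodesic_seg dY q r g2 -> geodesic_seg dY r p g3 ->
     forall P Q Rr : R * R,
       eucl P Q = dY p q -> eucl Q Rr = dY q r -> eucl Rr P = dY r p ->
       let on_tri x Xc :=
         on_side dY p q g1 P Q x Xc \/ on_side dY q r g2 Q Rr x Xc \/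
         on_side dY r p g3 Rr P x Xc in
       forall x Xc y Yc, on_tri x Xc -> on_tri y Yc -> dY x y <= eucl Xc Yc).

Definition asymptotically_CAT0 {X : Type} (d : X -> X -> R) : Prop :=
  forall U : (nat -> Prop) -> Prop, nonprincipal_ultrafilter U ->
  forall (b : nat -> X) (s : nat -> R),
    (forall M, exists N : nat, forall m : nat, (N <= m)%nat -> M < s m) ->
    CAT0 (cone_dist d U b s).

(** Riemannian circle of length L > 0 modelled as [0,L) with
    d_S(p,q) = min(|p-q|, L-|p-q|); the antipode of p in [0,L/2) is p+L/2. *)
Definition circle_dist (L p q : R) : R := Rmin (Rabs (p - q)) (L - Rabs (p - q)).

Definition R_circle {X : Type} (d : X -> X -> R) (Rg L : R) (alpha : R -> X) : Prop :=
  forall p q, 0 <= p < L -> 0 <= q < L ->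
    d (alpha p) (alpha q) <= circle_dist L p q + Rg.

Definition almost_isometric {X : Type} (d : X -> X -> R) (K L : R) (alpha : R -> X) : Prop :=
  forall p, 0 <= p < L / 2 -> d (alpha p) (alpha (p + L / 2)) >= (1 / K) * (L / 2).

Definition strongly_shortcut {X : Type} (d : X -> X -> R) : Prop :=
  exists K, 1 < K /\
  forall Rg, 0 <= Rg -> exists B, forall (L : R) (alpha : R -> X),
    0 < L -> R_circle d Rg L alpha -> almost_isometric d K L alpha -> L <= B.

From Stdlib Require Import Reals Lra Lia Classical ClassicalEpsilon.
From mathcomp Require classical_sets filter.
Open Scope R_scope.

(* Take K = 5/4 and suppose the 1/K-almost isometric R-circles had unbounded lengths L_m.
   Rescaling the m-th circle by 1/L_m, its points at parameters 0, 1/4, 1/2, 3/4 give four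
   points p, q, h, q' of an asymptotic cone forming a quadrilateral with sides at most 1/4
   and both diagonals at least 2/5.  In a CAT(0) space the CN inequality at the midpoint of
   [p, h] gives d(p,h)^2 + d(q,q')^2 <= 4 (1/4)^2 = 1/4 < 8/25, a contradiction. *)

Lemma nonprincipal_ultrafilter_exists : exists U, nonprincipal_ultrafilter U.
Proof.
  destruct (@filter.ultraFilterLemma nat filter.eventually filter.eventually_filter)
    as [G [HG Hsub]].
  pose proof (@filter.ultra_proper _ _ HG) as HP.
  pose proof (@filter.filter_filter _ _ HP) as HF.
  exists G; repeat split.
  - exact (@filter.filterT _ _ HF).
  - exact (@filter.filter_not_empty _ G HP).
  - intros A B HA HB; exact (@filter.filterI _ _ HF A B HA HB).
  - intros A B HA HAB; exact (@filter.filterS _ _ HF A B HAB HA).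
  - intros A; exact (@filter.in_ultra_setVsetC _ G A HG).
  - intros k; apply Hsub; exists (S k); [exact I|].
    intros n Hn ->; unfold classical_sets.mkset in Hn.
    rewrite ssrnat.ltnn in Hn; discriminate.
Qed.

Section Ultralimits.

Variable U : (nat -> Prop) -> Prop.
Hypothesis HU : nonprincipal_ultrafilter U.

Lemma ultra_mono (A B : nat -> Prop) : U A -> (forall n, A n -> B n) -> U B.
Proof. apply HU. Qed.

Lemma ultra_and (A B : nat -> Prop) : U A -> U B -> U (fun n => A n /\ B n).
Proof. apply HU. Qed.

Lemma ultra_dichotomy (A : nat -> Prop) : U A \/ U (fun n => ~ A n).
Proof. apply HU. Qed.

Lemma ultra_cofinite (k : nat) : U (fun n => n <> k).
Proof. apply HU. Qed.

Lemma ultra_all (A : nat -> Prop) : (forall n, A n) -> U A.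
Proof. intros HA; apply (ultra_mono (fun _ => True)); [apply HU | auto]. Qed.

Lemma ultra_inhabited (A : nat -> Prop) : U A -> exists n, A n.
Proof.
  intros HA; apply NNPP; intros Hno.
  destruct HU as (_ & Hempty & _); apply Hempty, (ultra_mono A); [exact HA|].
  intros n Hn; apply Hno; exists n; exact Hn.
Qed.

Lemma ultra_tail (N : nat) : U (fun m => (N <= m)%nat).
Proof.
  induction N as [|N IH].
  - apply ultra_all; intros; lia.
  - apply (ultra_mono _ _ (ultra_and _ _ IH (ultra_cofinite N))).
    intros n [h1 h2]; lia.
Qed.

Lemma is_ulim_unique a L L' : is_ulim U a L -> is_ulim U a L' -> L = L'.
Proof.
  intros H H'; apply NNPP; intros Hne.
  assert (Heps : 0 < Rabs (L - L') / 2)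
    by (apply Rdiv_lt_0_compat; [apply Rabs_pos_lt; lra | lra]).
  destruct (ultra_inhabited _ (ultra_and _ _ (H _ Heps) (H' _ Heps))) as [n [h h']].
  revert h h'; split_Rabs; lra.
Qed.

Lemma ulim_of_is_ulim a L : is_ulim U a L -> ulim U a = L.
Proof.
  intros H; unfold ulim; destruct excluded_middle_informative as [Hex|Hno].
  - destruct (constructive_indefinite_description _ Hex) as [L' H']; simpl.
    exact (is_ulim_unique _ _ _ H' H).
  - exfalso; apply Hno; exists L; exact H.
Qed.

(* The ultralimit is the supremum of the [c] with [c <= a m] for U-almost all [m]. *)
Lemma is_ulim_of_bounded a C : (forall m, Rabs (a m) <= C) -> is_ulim U a (ulim U a).
Proof.
  intros HC.
  set (S := fun c => U (fun m => c <= a m)).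
  assert (HSbound : bound S).
  { exists C; intros c Hc; apply Rnot_lt_le; intros HCc.
    destruct (ultra_inhabited _ Hc) as [n Hn].
    specialize (HC n); revert HC; split_Rabs; lra. }
  assert (HSne : exists c, S c).
  { exists (- C); apply ultra_all; intros n; specialize (HC n); revert HC; split_Rabs; lra. }
  destruct (completeness S HSbound HSne) as [L [HLub HLleast]].
  enough (HL : is_ulim U a L) by (rewrite (ulim_of_is_ulim _ _ HL); exact HL).
  intros eps Heps.
  assert (Hbelow : exists c, S c /\ L - eps < c).
  { apply NNPP; intros Hno.
    assert (L <= L - eps); [|lra].
    apply HLleast; intros c Hc; apply Rnot_lt_le; intros Hlt.
    apply Hno; exists c; split; assumption. }
  destruct Hbelow as [c [Hc Hcl]].
  assert (Habove : U (fun m => a m < L + eps / 2)).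
  { destruct (ultra_dichotomy (fun m => L + eps / 2 <= a m)) as [Hge|Hlt].
    - assert (L + eps / 2 <= L) by (apply HLub; exact Hge); lra.
    - apply (ultra_mono _ _ Hlt); intros n; lra. }
  apply (ultra_mono _ _ (ultra_and _ _ Hc Habove)); intros n [h h'].
  split_Rabs; lra.
Qed.

Lemma is_ulim_le a L c : is_ulim U a L -> U (fun m => a m <= c) -> L <= c.
Proof.
  intros H Hc; apply Rnot_lt_le; intros Hlt.
  destruct (ultra_inhabited _ (ultra_and _ _ (H (L - c) ltac:(lra)) Hc)) as [n [h h']].
  revert h; split_Rabs; lra.
Qed.

Lemma is_ulim_ge a L c : is_ulim U a L -> U (fun m => c <= a m) -> c <= L.
Proof.
  intros H Hc; apply Rnot_lt_le; intros Hlt.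
  destruct (ultra_inhabited _ (ultra_and _ _ (H (c - L) ltac:(lra)) Hc)) as [n [h h']].
  revert h; split_Rabs; lra.
Qed.

Lemma is_ulim_perturb a c e f L :
  is_ulim U a L -> is_ulim U e 0 -> is_ulim U f 0 ->
  (forall m, Rabs (a m - c m) <= e m + f m) -> is_ulim U c L.
Proof.
  intros Ha He Hf Hac eps Heps.
  assert (Heps3 : 0 < eps / 3) by lra.
  apply (ultra_mono _ _ (ultra_and _ _ (Ha _ Heps3) (ultra_and _ _ (He _ Heps3) (Hf _ Heps3)))).
  intros m [h1 [h2 h3]]; specialize (Hac m); revert h1 h2 h3 Hac; split_Rabs; lra.
Qed.

End Ultralimits.

Lemma div_le_of_le_mul a b c : 0 < c -> a <= b * c -> a / c <= b.
Proof.
  intros Hc H; replace b with (b * c / c) by (field; lra).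
  apply Rmult_le_compat_r; [left; apply Rinv_0_lt_compat|]; assumption.
Qed.

Lemma le_div_of_mul_le a b c : 0 < c -> b * c <= a -> b <= a / c.
Proof.
  intros Hc H; replace b with (b * c / c) by (field; lra).
  apply Rmult_le_compat_r; [left; apply Rinv_0_lt_compat|]; assumption.
Qed.

Lemma Rabs_div_sub_le x y u c : 0 < c -> Rabs (x - y) <= u -> Rabs (x / c - y / c) <= u / c.
Proof.
  intros Hc H; rewrite <- Rdiv_minus_distr; unfold Rdiv.
  rewrite Rabs_mult, (Rabs_pos_eq (/ c)) by (left; apply Rinv_0_lt_compat; exact Hc).
  apply Rmult_le_compat_r; [left; apply Rinv_0_lt_compat|]; assumption.
Qed.

Lemma metric_dist_sub_le {X : Type} (d : X -> X -> R) x y x' y' :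
  is_metric d -> Rabs (d x y - d x' y') <= d x x' + d y y'.
Proof.
  intros (_ & _ & Hsym & Htri).
  pose proof (Htri x x' y); pose proof (Htri x' y' y); pose proof (Htri x' x y');
  pose proof (Htri x y y'); rewrite (Hsym x' x) in *; rewrite (Hsym y' y) in *.
  split_Rabs; lra.
Qed.

Section AsymptoticCone.

Variables (X : Type) (d : X -> X -> R).
Hypothesis Hd : is_metric d.
Variable U : (nat -> Prop) -> Prop.
Hypothesis HU : nonprincipal_ultrafilter U.
Variables (b : nat -> X) (s : nat -> R).
Hypothesis Hs : forall m, 0 < s m.

Lemma cone_pd_spec (x y : cone_seq d b s) :
  is_ulim U (fun m => d (proj1_sig x m) (proj1_sig y m) / s m) (cone_pd d U b s x y).
Proof.
  destruct x as [x [Cx HCx]], y as [y [Cy HCy]]; unfold cone_pd; simpl.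
  apply (is_ulim_of_bounded U HU _ (Cx + Cy)); intros m.
  pose proof (metric_dist_sub_le d (x m) (y m) (b m) (b m) Hd) as Htri.
  destruct Hd as (Hpos & Hzero & _).
  rewrite (proj2 (Hzero (b m) (b m)) eq_refl), Rminus_0_r, Rabs_pos_eq in Htri by apply Hpos.
  rewrite Rabs_pos_eq by (apply Rmult_le_pos; [apply Hpos | left; apply Rinv_0_lt_compat, Hs]).
  specialize (HCx m); specialize (HCy m).
  apply Rle_trans with (d (x m) (b m) / s m + d (y m) (b m) / s m); [|lra].
  rewrite <- Rdiv_plus_distr; apply Rmult_le_compat_r; [left; apply Rinv_0_lt_compat, Hs | lra].
Qed.

Definition cone_class (x : cone_seq d b s) : cone_pt d U b s :=
  exist _ (fun y => cone_pd d U b s x y = 0) (ex_intro _ x eq_refl).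

Lemma cone_pd_refl (x : cone_seq d b s) : cone_pd d U b s x x = 0.
Proof.
  apply (ulim_of_is_ulim U HU); intros eps Heps; apply (ultra_all U HU); intros m.
  destruct Hd as (_ & Hzero & _).
  rewrite (proj2 (Hzero _ _) eq_refl), Rdiv_0_l, Rminus_0_r, Rabs_R0; exact Heps.
Qed.

(* [cone_rep] returns some representative of the class, which in general is
   only at pseudo-distance 0 from the sequence the class was built from. *)
Lemma cone_rep_class (x : cone_seq d b s) : cone_pd d U b s (cone_rep (cone_class x)) x = 0.
Proof.
  unfold cone_rep; destruct (constructive_indefinite_description _ _) as [r Hr]; simpl in *.
  rewrite <- (f_equal (fun P => P x) Hr); apply cone_pd_refl.
Qed.

Lemma cone_dist_class (x y : cone_seq d b s) :
  is_ulim U (fun m => d (proj1_sig x m) (proj1_sig y m) / s m)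
    (cone_dist d U b s (cone_class x) (cone_class y)).
Proof.
  pose proof (cone_pd_spec (cone_rep (cone_class x)) x) as Hrx.
  pose proof (cone_pd_spec (cone_rep (cone_class y)) y) as Hry.
  rewrite cone_rep_class in Hrx, Hry.
  apply (is_ulim_perturb U HU _ _ _ _ _ (cone_pd_spec _ _) Hrx Hry); intros m.
  rewrite <- Rdiv_plus_distr; apply Rabs_div_sub_le; [apply Hs | apply metric_dist_sub_le, Hd].
Qed.

End AsymptoticCone.

Lemma eucl_sq P Q : eucl P Q ^ 2 = (fst P - fst Q) ^ 2 + (snd P - snd Q) ^ 2.
Proof.
  apply pow2_sqrt.
  pose proof (pow2_ge_0 (fst P - fst Q)); pose proof (pow2_ge_0 (snd P - snd Q)); lra.
Qed.

Lemma eucl_eq_of_sq P Q r :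
  0 <= r -> (fst P - fst Q) ^ 2 + (snd P - snd Q) ^ 2 = r ^ 2 -> eucl P Q = r.
Proof. intros Hr H; unfold eucl; rewrite H; apply sqrt_pow2, Hr. Qed.

Lemma eucl_sym P Q : eucl P Q = eucl Q P.
Proof. unfold eucl; f_equal; ring. Qed.

Lemma eucl_midpoint_sq A B C :
  eucl (lin A B (1 / 2)) C ^ 2 = (eucl A C ^ 2 + eucl B C ^ 2) / 2 - eucl A B ^ 2 / 4.
Proof. rewrite !eucl_sq; unfold lin; simpl; field. Qed.

Lemma lin_0 A B : lin A B 0 = A.
Proof. destruct A; unfold lin; simpl; f_equal; ring. Qed.

Lemma euclidean_triangle_exists a b c :
  0 < c -> a <= b + c -> b <= a + c -> c <= a + b ->
  exists P Q Rr : R * R, eucl P Q = c /\ eucl Q Rr = b /\ eucl Rr P = a.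
Proof.
  intros Hc Ha Hb Hab.
  set (u := (c ^ 2 + a ^ 2 - b ^ 2) / (2 * c)).
  assert (Hu : 2 * c * u = c ^ 2 + a ^ 2 - b ^ 2) by (unfold u; field; lra).
  assert (Hua : u ^ 2 <= a ^ 2).
  { apply Rmult_le_reg_l with ((2 * c) ^ 2); [nra|].
    replace ((2 * c) ^ 2 * u ^ 2) with ((2 * c * u) ^ 2) by ring; rewrite Hu.
    (* (2ca)^2 - (c^2 + a^2 - b^2)^2 = (b^2 - (c - a)^2) ((c + a)^2 - b^2) *)
    assert (0 <= (b - c + a) * (b + c - a) * ((c + a) ^ 2 - b ^ 2)); [|nra].
    apply Rmult_le_pos; [apply Rmult_le_pos; lra|nra]. }
  set (v := sqrt (a ^ 2 - u ^ 2)).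
  assert (Hv : v ^ 2 = a ^ 2 - u ^ 2) by (apply pow2_sqrt; lra).
  exists (0, 0), (c, 0), (u, v); repeat split; apply eucl_eq_of_sq; simpl in *; nra.
Qed.

Lemma CAT0_CN_inequality {Y : Type} (dY : Y -> Y -> R) p h x g :
  CAT0 dY -> geodesic_seg dY p h g -> 0 < dY p h ->
  dY (g (dY p h / 2)) x ^ 2 <= (dY p x ^ 2 + dY h x ^ 2) / 2 - dY p h ^ 2 / 4.
Proof.
  intros (Hd & Hgeo & Hcomp) Hg HD.
  destruct (Hgeo h x) as [g2 Hg2], (Hgeo x p) as [g3 Hg3].
  pose proof Hd as (Hpos & _ & Hsym & Htri).
  pose proof (Htri x h p); pose proof (Htri h p x); pose proof (Htri p x h).
  rewrite (Hsym x h), (Hsym h p), (Hsym p x) in *.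
  destruct (euclidean_triangle_exists (dY x p) (dY h x) (dY p h) HD ltac:(lra) ltac:(lra) ltac:(lra))
    as (P & Q & Rr & HPQ & HQR & HRP).
  (* Compare the midpoint of [p, h] with the vertex x, seen as the start of the side [x, p]. *)
  assert (Hmid : dY (g (dY p h / 2)) x <= eucl (lin P Q (1 / 2)) Rr).
  { apply (Hcomp p h x g g2 g3 Hg Hg2 Hg3 P Q Rr HPQ HQR HRP).
    - left; exists (dY p h / 2); repeat split; try lra; f_equal; field; lra.
    - right; right; exists 0; split; [split; [lra | apply Hpos]|split].
      + symmetry; apply Hg3.
      + rewrite Rdiv_0_l, lin_0; reflexivity. }
  apply Rle_trans with (eucl (lin P Q (1 / 2)) Rr ^ 2).
  - apply pow_incr; split; [apply Hpos | exact Hmid].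
  - rewrite eucl_midpoint_sq, (eucl_sym P Rr), HPQ, HRP, HQR; lra.
Qed.

Lemma CAT0_quadrilateral_diagonals {Y : Type} (dY : Y -> Y -> R) p q h q' a :
  CAT0 dY -> dY p q <= a -> dY q h <= a -> dY h q' <= a -> dY q' p <= a ->
  dY p h ^ 2 + dY q q' ^ 2 <= 4 * a ^ 2.
Proof.
  intros HC Hpq Hqh Hhq' Hq'p.
  pose proof HC as ((Hpos & Hzero & Hsym & Htri) & Hgeo & _).
  pose proof (Hpos p q); pose proof (Hpos p h); pose proof (Hpos q q').
  destruct (Rle_lt_or_eq_dec 0 (dY p h) (Hpos p h)) as [HD|HD].
  - destruct (Hgeo p h) as [g Hg].
    set (mid := g (dY p h / 2)).
    pose proof (CAT0_CN_inequality dY p h q g HC Hg HD) as Hq.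
    pose proof (CAT0_CN_inequality dY p h q' g HC Hg HD) as Hq'.
    fold mid in Hq, Hq'.
    rewrite (Hsym h q), (Hsym p q') in *.
    assert (Hmq : dY mid q ^ 2 <= a ^ 2 - dY p h ^ 2 / 4)
      by (pose proof (Hpos q h); nra).
    assert (Hmq' : dY mid q' ^ 2 <= a ^ 2 - dY p h ^ 2 / 4)
      by (pose proof (Hpos h q'); pose proof (Hpos q' p); nra).
    pose proof (Htri q mid q'); pose proof (Hpos mid q); pose proof (Hpos mid q').
    rewrite (Hsym q mid) in *.
    assert (dY q q' ^ 2 <= (dY mid q + dY mid q') ^ 2) by (apply pow_incr; lra).
    pose proof (pow2_ge_0 (dY mid q - dY mid q')); nra.
  - apply eq_sym, Hzero in HD; subst h.
    pose proof (Htri q p q'); rewrite (Hsym q p) in *.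
    rewrite (proj2 (Hzero p p) eq_refl); nra.
Qed.

Lemma circle_dist_le_abs L p q : circle_dist L p q <= Rabs (p - q).
Proof. apply Rmin_l. Qed.

Lemma circle_dist_le_compl L p q : circle_dist L p q <= L - Rabs (p - q).
Proof. apply Rmin_r. Qed.

Lemma circle_dist_scale L t u : 0 <= L -> circle_dist L (t * L) (u * L) = L * circle_dist 1 t u.
Proof.
  intros HL; unfold circle_dist.
  replace (t * L - u * L) with ((t - u) * L) by ring.
  rewrite Rabs_mult, (Rabs_pos_eq L HL).
  pose proof (Rabs_pos (t - u)); unfold Rmin; destruct Rle_dec, Rle_dec; nra.
Qed.

Lemma diverges_of_gt_INR (L : nat -> R) :
  (forall m, INR m + 1 < L m) -> forall M, exists N : nat, forall m, (N <= m)%nat -> M < L m.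
Proof.
  intros HL M; destruct (INR_unbounded M) as [N HN]; exists N; intros m Hm.
  apply le_INR in Hm; specialize (HL m); lra.
Qed.

Lemma seq_of_unbounded {A : Type} (P Q : R -> A -> Prop) :
  ~ (exists B, forall l a, 0 < l -> P l a -> Q l a -> l <= B) ->
  exists (L : nat -> R) (a : nat -> A),
    (forall m, INR m + 1 < L m) /\ (forall m, P (L m) (a m)) /\ (forall m, Q (L m) (a m)).
Proof.
  intros Hunb.
  assert (Hex : forall m : nat, exists la : R * A,
             INR m + 1 < fst la /\ P (fst la) (snd la) /\ Q (fst la) (snd la)).
  { intros m; apply NNPP; intros Hno; apply Hunb; exists (INR m + 1); intros l a Hl HP HQ.
    apply Rnot_lt_le; intros Hlt; apply Hno; exists (l, a); auto. }
  destruct (choice _ Hex) as [f Hf].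
  exists (fun m => fst (f m)), (fun m => snd (f m)); repeat split; intros m; apply Hf.
Qed.

Section CirclesInCone.

Variables (X : Type) (d : X -> X -> R).
Hypothesis Hd : is_metric d.
Variable U : (nat -> Prop) -> Prop.
Hypothesis HU : nonprincipal_ultrafilter U.
Variables (K Rg : R) (L : nat -> R) (alpha : nat -> R -> X).
Hypothesis HRg : 0 <= Rg.
Hypothesis HL : forall m, INR m + 1 < L m.
Hypothesis Hcirc : forall m, R_circle d Rg (L m) (alpha m).
Hypothesis Hai : forall m, almost_isometric d K (L m) (alpha m).

Local Notation base := (fun m => alpha m 0).
Local Notation cdist := (cone_dist d U base L).

Let L_ge_1 m : 1 <= L m.
Proof. pose proof (pos_INR m); specialize (HL m); lra. Qed.

Let L_pos m : 0 < L m.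
Proof. pose proof (L_ge_1 m); lra. Qed.

Definition arc_seq (t : R) (m : nat) : X := alpha m (t * L m).

Lemma arc_seq_bounded t : 0 <= t < 1 -> exists C, forall m, d (arc_seq t m) (base m) / L m <= C.
Proof.
  intros Ht; exists (1 / 2 + Rg); intros m.
  pose proof (L_ge_1 m).
  apply div_le_of_le_mul; [lra|].
  assert (Htm : 0 <= t * L m < L m) by nra.
  pose proof (Hcirc m (t * L m) 0 Htm ltac:(lra)) as Hc.
  pose proof (circle_dist_le_abs (L m) (t * L m) 0).
  pose proof (circle_dist_le_compl (L m) (t * L m) 0).
  unfold arc_seq; nra.
Qed.

Definition arc_point t (Ht : 0 <= t < 1) : cone_pt d U base L :=
  cone_class X d U base L (exist _ (arc_seq t) (arc_seq_bounded t Ht)).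

Lemma arc_point_dist_le t u (Ht : 0 <= t < 1) (Hu : 0 <= u < 1) :
  cdist (arc_point t Ht) (arc_point u Hu) <= circle_dist 1 t u.
Proof.
  pose proof (cone_dist_class X d Hd U HU base L L_pos
                (exist _ _ (arc_seq_bounded t Ht)) (exist _ _ (arc_seq_bounded u Hu))) as Hlim.
  apply Rle_plus_epsilon; intros eps Heps.
  apply (is_ulim_le U HU _ _ _ Hlim).
  destruct (diverges_of_gt_INR L HL (Rg / eps)) as [N HN].
  apply (ultra_mono U HU _ _ (ultra_tail U HU N)); intros m Hm; simpl.
  specialize (HN m Hm); pose proof (L_ge_1 m).
  assert (HRgL : Rg <= eps * L m)
    by (replace Rg with (Rg / eps * eps) by (field; lra); nra).
  apply div_le_of_le_mul; [lra|].
  assert (Htm : 0 <= t * L m < L m) by nra; assert (Hum : 0 <= u * L m < L m) by nra.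
  pose proof (Hcirc m _ _ Htm Hum) as Hc.
  rewrite circle_dist_scale in Hc by lra.
  unfold arc_seq; nra.
Qed.

Lemma arc_point_antipodal_ge t (Ht : 0 <= t < 1) (Ht' : 0 <= t + 1 / 2 < 1) :
  1 / K / 2 <= cdist (arc_point t Ht) (arc_point (t + 1 / 2) Ht').
Proof.
  pose proof (cone_dist_class X d Hd U HU base L L_pos
                (exist _ _ (arc_seq_bounded t Ht)) (exist _ _ (arc_seq_bounded _ Ht'))) as Hlim.
  apply (is_ulim_ge U HU _ _ _ Hlim), (ultra_all U HU); intros m; simpl.
  pose proof (L_ge_1 m).
  apply le_div_of_mul_le; [lra|].
  assert (Htm : 0 <= t * L m < L m / 2) by nra.
  pose proof (Hai m _ Htm) as Ha.
  unfold arc_seq; replace ((t + 1 / 2) * L m) with (t * L m + L m / 2) by field.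
  replace (1 / K / 2 * L m) with (1 / K * (L m / 2)) by (unfold Rdiv; ring); lra.
Qed.

Lemma cone_quadrilateral_of_circles :
  exists p q h q' : cone_pt d U base L,
    cdist p q <= 1 / 4 /\ cdist q h <= 1 / 4 /\ cdist h q' <= 1 / 4 /\ cdist q' p <= 1 / 4 /\
    1 / K / 2 <= cdist p h /\ 1 / K / 2 <= cdist q q'.
Proof.
  assert (H0 : 0 <= 0 < 1) by lra; assert (H1 : 0 <= 1 / 4 < 1) by lra.
  assert (H2 : 0 <= 0 + 1 / 2 < 1) by lra; assert (H3 : 0 <= 1 / 4 + 1 / 2 < 1) by lra.
  exists (arc_point 0 H0), (arc_point (1 / 4) H1), (arc_point _ H2), (arc_point _ H3).
  repeat split; try apply arc_point_antipodal_ge.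
  all: eapply Rle_trans; [apply arc_point_dist_le|].
  all: try (eapply Rle_trans; [apply circle_dist_le_abs | split_Rabs; lra]).
  eapply Rle_trans; [apply circle_dist_le_compl | split_Rabs; lra].
Qed.

End CirclesInCone.

Theorem theorem6p1 (X : Type) (d : X -> X -> R) (Rg : R) :
  is_metric d -> 0 <= Rg -> rough_geodesic d Rg -> asymptotically_CAT0 d ->
  strongly_shortcut d.
Proof.
  intros Hd _ _ Hcone.
  exists (5 / 4); split; [lra|]; intros Rc HRc.
  apply NNPP; intros Hunbounded.
  destruct (seq_of_unbounded _ _ Hunbounded) as (L & alpha & HL & Hcirc & Hai).
  destruct nonprincipal_ultrafilter_exists as [U HU].
  destruct (cone_quadrilateral_of_circles X d Hd U HU (5 / 4) Rc L alpha HRc HL Hcirc Hai)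
    as (p & q & h & q' & Hpq & Hqh & Hhq' & Hq'p & Hph & Hqq').
  pose proof (CAT0_quadrilateral_diagonals _ p q h q' (1 / 4)
                (Hcone U HU _ L (diverges_of_gt_INR L HL)) Hpq Hqh Hhq' Hq'p).
  nra.
Qed.
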